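(* In the construction below, let $P_0,\dots,P_K$ be partitions of $X$ such that every part of $P_k$ has diameter at most $\tau^{-k}$, and for $x\in X$ define $\psi_k(x):=\mathsf f_k\big(B_X(P_k(x),\tau^{-k}/2)\big)$, where $P_k(x)$ is the part of $P_k$ containing $x$. Then for every $x\in X$, $\langle(\psi_0(x),0),(\psi_1(x),1),\dots,(\psi_K(x),K)\rangle$ is a directed path in $\mathcal D$, i.e. $(\psi_k(x),\psi_{k+1}(x))\in A_k$ for all $k\in\{0,\dots,K-1\}$.
   Context: Construction. Let $(X,d)$ be a metric space with $n=|X|\ge2$ and $\mathrm{diam}(X)=1$. For $S\subseteq X$, $r\ge0$: $B_X(S,r):=\{x\in X:\exists s\in S,\ d(x,s)\le r\}$ and $B_X(x,r):=B_X(\{x\},r)$. Let $\varepsilon_0:=\min\{d(x,y):x\ne y\}$, $\tau:=12$, $K:=1+\lceil\log_\tau(1/\varepsilon_0)\rceil$. For $\eta>0$ the greedy $\eta$-net is built as: $N_0=\emptyset$; for $j\ge1$, $S_j:=X\setminus B_X(N_{j-1},\eta)$; if $S_j=\emptyset$ output $N_{j-1}$; else pick $x_j\in S_j$ maximizing $|B_X(x,\eta/3)|$ and set $N_j=N_{j-1}\cup\{x_j\}$. For $k=0,\dots,K$ let $U_k$ be the greedy $\tau^{-k}$-net. For $k<K$, $A_k$ is the set of pairs $(u,u')\in U_k\times U_{k+1}$ with (i) $d(u,u')\le4\tau^{-k}$ and (ii) $|B_X(u,\tau^{-k}/3)|\ge\max\{|B_X(w,\tau^{-k}/3)|:w\in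 B_X(u',6\tau^{-(k+1)})\}$. The directed graph $\mathcal D$ has vertex set $\{(u,k):u\in U_k,\ 0\le k\le K\}$ and arcs $((u,k),(u',k+1))$ for $(u,u')\in A_k$. For nonempty $S\subseteq X$, $\mathsf f_k(S)$ denotes a (fixed) maximizer of $|B_X(y,\tau^{-k}/3)|$ over $y\in B_X(S,2\tau^{-k})\cap U_k$. *)

From HB Require Import structures.
From mathcomp Require Import all_boot all_order all_algebra.
From mathcomp Require Import reals exp.
Set Implicit Arguments. Unset Strict Implicit. Unset Printing Implicit Defensive.
Import Order.TTheory GRing.Theory Num.Theory.
Local Open Scope ring_scope.

Section Defs.
Variables (R : realType) (X : finType) (d : X -> X -> R).

Definition is_metric : Prop :=
  [/\ forall x y, 0 <= d x y,
      forall x y, d x y = 0 <-> x = y,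
      forall x y, d x y = d y x &
      forall x y z, d x z <= d x y + d y z].

Definition diam_one : Prop :=
  (forall x y, d x y <= 1) /\ exists x y, d x y = 1.

Definition is_min_dist (e0 : R) : Prop :=
  (exists x y, x != y /\ d x y = e0) /\ forall x y, x != y -> e0 <= d x y.

Definition tau : R := 12%:R.

(* K = 1 + ceil(log_tau (1/e0)) ; the ceiling is >= 0 since e0 <= 1 *)
Definition Kdepth (e0 : R) : nat :=
  (1 + `|Num.ceil (ln (e0^-1) / ln tau)|)%N.

Definition ballS (S : {set X}) (r : R) : {set X} :=
  [set x | [exists s in S, d x s <= r]].
Definition ball (x : X) (r : R) : {set X} := ballS [set x] r.

(* s = [:: x_1; ...; x_m] is a run of the greedy eta-net construction:
   each x_{j+1} lies in S_{j+1} = X \ B(N_j, eta) and maximizes |B(x, eta/3)|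
   over S_{j+1}; the construction stops when S_{m+1} is empty. *)
Definition greedy_run (eta : R) (s : seq X) : Prop :=
  (forall (j : nat) (x0 : X), (j < size s)%N ->
     let N := [set y in take j s] in
     let xj := nth x0 s j in
     xj \notin ballS N eta /\
     forall y, y \notin ballS N eta -> #|ball y (eta / 3)| <= #|ball xj (eta / 3)|)%N
  /\ ballS [set y in s] eta = setT.

Definition inA (k : nat) (Uk Uk1 : {set X}) (u u' : X) : Prop :=
  [/\ u \in Uk, u' \in Uk1,
      d u u' <= 4 * tau ^- k &
      forall w, w \in ball u' (6 * tau ^- k.+1) ->
        (#|ball w (tau ^- k / 3)| <= #|ball u (tau ^- k / 3)|)%N].

Definition is_fk (k : nat) (Uk : {set X}) (fk : {set X} -> X) : Prop :=
  forall S : {set X}, S != set0 ->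
    fk S \in ballS S (2 * tau ^- k) :&: Uk /\
    forall y, y \in ballS S (2 * tau ^- k) :&: Uk ->
      (#|ball y (tau ^- k / 3)| <= #|ball (fk S) (tau ^- k / 3)|)%N.

End Defs.

From HB Require Import structures.
From mathcomp Require Import all_boot all_order all_algebra.
From mathcomp Require Import reals exp.
From mathcomp Require Import lra.
Import Order.TTheory GRing.Theory Num.Theory.
Local Open Scope ring_scope.

(* Write t := tau^-k.  The centre psi_k(x) lies within 2t of a point of
   B(P_k(x), t/2), so within 7t/2 of x; hence d(psi_k x, psi_{k+1} x) <=
   (7/2)(1 + 1/12) t <= 4t.  For w within 6t/12 of psi_{k+1}(x), the greedy
   construction of U_k provides y in U_k with d(w, y) <= t and
   |B(w, t/3)| <= |B(y, t/3)|; then d(y, x) <= 2t, so y competes in the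
   maximisation defining psi_k(x), and |B(y, t/3)| <= |B(psi_k x, t/3)|. *)

Lemma tau_expr_gt0 (R : realType) (k : nat) : 0 < tau R ^- k.
Proof. by rewrite invr_gt0 exprn_gt0 // /tau ltr0n. Qed.

Lemma tau_exprS (R : realType) (k : nat) : tau R ^- k.+1 = tau R ^- k / 12.
Proof. by rewrite exprSr invfM. Qed.

Section Metric.
Context {R : realType} {X : finType} {d : X -> X -> R}.
Hypothesis metric_d : is_metric d.

Let d_refl x : d x x = 0. Proof. by case: metric_d => _ /(_ x x) [_ ->]. Qed.
Let d_sym x y : d x y = d y x. Proof. by case: metric_d. Qed.
Let d_tri x y z : d x z <= d x y + d y z. Proof. by case: metric_d. Qed.

Lemma mem_ballS_self (S : {set X}) (r : R) x : 0 <= r -> x \in S -> x \in ballS d S r.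
Proof. by move=> r_ge0 xS; rewrite inE; apply/existsP; exists x; rewrite xS d_refl. Qed.

Lemma greedy_run_dominates {eta : R} {s : seq X} w : greedy_run d eta s ->
  exists2 y, y \in s & d w y <= eta /\
    (#|ball d w (eta / 3)| <= #|ball d y (eta / 3)|)%N.
Proof.
move=> [greedy cover_s].
pose covered j := w \in ballS d [set y in take j s] eta.
have covered_size : covered (size s) by rewrite /covered take_size cover_s inE.
case: (ex_minnP (ex_intro covered _ covered_size)) => m covered_m min_m.
have m_le : (m <= size s)%N by exact: min_m.
case: m covered_m min_m m_le => [|j] covered_m min_m j_lt.
  by move: covered_m; rewrite /covered take0 inE => /existsP [? /andP []]; rewrite inE.
have [_ /(_ w) max_j] := greedy j w j_lt.
have not_covered_j : w \notin ballS d [set y in take j s] eta.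
  by apply/negP => /min_m; rewrite ltnn.
exists (nth w s j); first exact: mem_nth.
split; last exact: max_j.
move: covered_m; rewrite /covered (take_nth w j_lt) inE => /existsP [y /andP []].
rewrite inE mem_rcons in_cons => /orP [/eqP -> // | y_in wy].
by case/negP: not_covered_j; rewrite inE; apply/existsP; exists y; rewrite inE y_in.
Qed.

Section Centre.
Context {k : nat} {Uk : {set X}} {fk : {set X} -> X}.
Hypothesis fk_max : is_fk d k Uk fk.
Context {C : {set X}} {x : X} {rho delta : R}.
Hypotheses (rho_ge0 : 0 <= rho) (x_in_C : x \in C).
Hypothesis diam_C : forall y z, y \in C -> z \in C -> d y z <= delta.

Let u := fk (ballS d C rho).

Let fk_spec : u \in ballS d (ballS d C rho) (2 * tau R ^- k) :&: Uk /\
  forall y, y \in ballS d (ballS d C rho) (2 * tau R ^- k) :&: Uk ->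
    (#|ball d y (tau R ^- k / 3)| <= #|ball d u (tau R ^- k / 3)|)%N.
Proof. by apply: fk_max; apply/set0Pn; exists x; exact: mem_ballS_self. Qed.

Lemma fk_mem : u \in Uk.
Proof. by case: fk_spec => /setIP []. Qed.

Lemma fk_dist_le : d u x <= 2 * tau R ^- k + rho + delta.
Proof.
case: fk_spec => /setIP [+ _] _; rewrite inE => /existsP [y /andP []].
rewrite inE => /existsP [z /andP [z_in_C yz]] uy.
have := diam_C z x z_in_C x_in_C; have := d_tri u y x; have := d_tri y z x; lra.
Qed.

Lemma fk_dominates y : y \in Uk -> d y x <= 2 * tau R ^- k ->
  (#|ball d y (tau R ^- k / 3)| <= #|ball d u (tau R ^- k / 3)|)%N.
Proof.
move=> y_in_Uk yx; case: fk_spec => _; apply; rewrite inE y_in_Uk andbT inE.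
by apply/existsP; exists x; rewrite yx andbT mem_ballS_self.
Qed.

End Centre.

Lemma fk_pblock x {k Uk fk} {Pk : {set {set X}}} :
  is_fk d k Uk fk -> partition Pk [set: X] ->
  (forall C, C \in Pk -> forall y z, y \in C -> z \in C -> d y z <= tau R ^- k) ->
  let u := fk (ballS d (pblock Pk x) (tau R ^- k / 2)) in
  [/\ u \in Uk, d u x <= 7 / 2 * tau R ^- k &
    forall y, y \in Uk -> d y x <= 2 * tau R ^- k ->
      (#|ball d y (tau R ^- k / 3)| <= #|ball d u (tau R ^- k / 3)|)%N].
Proof.
move=> fk_k /and3P [/eqP cover_Pk _ _] diam_Pk u.
have t_gt0 := tau_expr_gt0 R k.
have rho_ge0 : 0 <= tau R ^- k / 2 by rewrite divr_ge0 // ltW.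
have x_cov : x \in cover Pk by rewrite cover_Pk inE.
have x_in_C : x \in pblock Pk x by rewrite mem_pblock.
have diam_C := diam_Pk _ (pblock_mem x_cov).
split; [exact: (fk_mem fk_k rho_ge0 x_in_C) | | exact: (fk_dominates fk_k rho_ge0 x_in_C)].
by have := fk_dist_le fk_k rho_ge0 x_in_C diam_C; lra.
Qed.

End Metric.

Theorem lemma3p8 (R : realType) (X : finType) (d : X -> X -> R) (e0 : R)
  (U : nat -> seq X) (f : nat -> {set X} -> X) (P : nat -> {set {set X}}) :
  is_metric d -> (1 < #|X|)%N -> diam_one d -> is_min_dist d e0 ->
  (forall k, (k <= Kdepth e0)%N -> greedy_run d (tau R ^- k) (U k)) ->
  (forall k, (k <= Kdepth e0)%N -> is_fk d k [set u in U k] (f k)) ->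
  (forall k, (k <= Kdepth e0)%N ->
     partition (P k) [set: X] /\
     forall C, C \in P k -> forall y z, y \in C -> z \in C -> d y z <= tau R ^- k) ->
  let psi k x := f k (ballS d (pblock (P k) x) (tau R ^- k / 2)) in
  forall x : X, forall k, (k < Kdepth e0)%N ->
    inA d k [set u in U k] [set u in U k.+1] (psi k x) (psi k.+1 x).
Proof.
move=> metric_d _ _ _ greedyU fkU partP psi x k k_lt.
have [_ _ d_sym d_tri] := metric_d.
have psi_spec j (j_le : (j <= Kdepth e0)%N) :=
  let: conj part_j diam_j := partP j j_le in
  fk_pblock metric_d x (fkU j j_le) part_j diam_j.
have [psi_k_in psi_k_x psi_k_max] := psi_spec k (ltnW k_lt).
have [psi_k1_in psi_k1_x _] := psi_spec k.+1 k_lt.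
rewrite /psi; set u := f k _ in psi_k_x psi_k_max *; set u' := f k.+1 _ in psi_k1_x *.
have t_gt0 := tau_expr_gt0 R k; rewrite tau_exprS in psi_k1_x *.
split => //.
  have := d_tri u x u'; rewrite (d_sym x).
  by clear -t_gt0 psi_k_x psi_k1_x; lra.
move=> w; rewrite inE => /existsP [_ /andP [/set1P -> w_near]].
have [y y_in [wy dominated]] := greedy_run_dominates w (greedyU k (ltnW k_lt)).
apply: leq_trans dominated (psi_k_max y _ _); first by rewrite inE.
move: w_near; rewrite tau_exprS => w_near.
have := d_tri y w x; have := d_tri w u' x; rewrite (d_sym y w).
by clear -t_gt0 psi_k1_x w_near wy; lra.
Qed.
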